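(* Assume the standing assumptions below (no LICQ assumption on the subproblems). Let a KKT point of the expanded problem $E$ be given, with primal variables and multipliers $\gamma_i=(\gamma_{0,i};\dots;\gamma_{N_i,i};\gamma_{tc,i})$ for the constraints of block $i<p$, multipliers $\lambda_p$ for block $p$, and $\hat\lambda_{-1},\dots,\hat\lambda_{p-1}$ for the coupling constraints. For $i=0,\dots,p-1$ set $$w_i=-(\gamma_{tc,i}+\hat\lambda_i),\qquad \lambda_i=\gamma_i+Z_iw_i,\qquad Z_i=\begin{bmatrix}-\mathcal A_i&-D_i&I\end{bmatrix}^T$$ (i.e. $\lambda_{0,i}=\gamma_{0,i}-\mathcal A_i^Tw_i$, $\lambda_{j+1,i}=\gamma_{j+1,i}-D_{j,i}^Tw_i$ for $j=0,\dots,N_i-1$, $\lambda_{tc,i}=\gamma_{tc,i}+w_i$). Then $w_i\in\ker(S_i^T)$, the same primal variables together with the multipliers $\lambda_0,\dots,\lambda_{p-1},\lambda_p,\hat\lambda$ again form a KKT point of $E$ (in particular $\lambda_i$ is an optimal multiplier vector of block $i$'s constraints), and $$\lambda_{tc,i}=-\hat\lambda_i,\qquad \lambda_{0,i}=\hat\lambda_{i-1},\qquad \lambda_{N_i,i}=\hat\lambda_i,\qquad i=0,\dots,p-1.$$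
   Context: Problem $\mathrm{MPC}_N$ ($N\ge2$): variables $x_0,\dots,x_N\in\mathbb R^{n_x}$, $u_t\in\mathbb R^{n_{u,t}}$; minimize $\sum_{t=0}^{N-1}\big(\tfrac12[x_t;u_t]^TH_t[x_t;u_t]+f_t^T[x_t;u_t]+c_t\big)+\tfrac12x_N^TH_Nx_N+f_N^Tx_N+c_N$ s.t. $x_0=\bar x$, $x_{t+1}=A_tx_t+B_tu_t+a_t$. Standing assumptions: $H_t$ symmetric positive semidefinite with lower-right block $H_{u,t}$ positive definite, $H_N$ positive semidefinite, LICQ holds. Splitting: integer $1\le p<N$, $N_0,\dots,N_p\ge1$ with $\sum N_i=N$, $\tau_i=\sum_{j<i}N_j$; block data $A_{t,i}=A_{\tau_i+t}$, etc. (same for $B,a,H,f,c$), $t=0,\dots,N_i-1$, and $H_{N_p,p}=H_N$, $f_{N_p,p}=f_N$, $c_{N_p,p}=c_N$. Products $\prod_{t=t_0}^{t_1}A_t=A_{t_1}\cdots A_{t_0}$ (empty $=I$). For $i<p$: $\mathcal A_i=\prod_{t=0}^{N_i-1}A_{t,i}$, $D_{j,i}=\prod_{s=j+1}^{N_i-1}A_{s,i}$, $D_i=[D_{0,i}\cdots D_{N_i-1,i}]$, $S_i=[D_{0,i}B_{0,i}\cdots D_{N_i-1,i}B_{N_i-1,i}]$, $\mathbf a_i=(a_{0,i};\dots;a_{N_i-1,i})$, $T_i$ a matrix whose columns form a basis of the range of $S_i$. Expanded problem $E$: variables $x_{t,i},u_{t,i}$ (all blocks $i=0,\dots,p$), $\bar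 x_0,\dots,\bar x_p$, $\bar d_0,\dots,\bar d_{p-1}$; objective $\sum_{i=0}^p\sum_{t=0}^{N_i-1}\big(\tfrac12[x_{t,i};u_{t,i}]^TH_{t,i}[x_{t,i};u_{t,i}]+f_{t,i}^T[x_{t,i};u_{t,i}]+c_{t,i}\big)+\tfrac12x_{N_p,p}^TH_{N_p,p}x_{N_p,p}+f_{N_p,p}^Tx_{N_p,p}+c_{N_p,p}$; constraints with multipliers: $x_{0,i}=\bar x_i$ ($\lambda_{0,i}$), $x_{t+1,i}=A_{t,i}x_{t,i}+B_{t,i}u_{t,i}+a_{t,i}$ ($\lambda_{t+1,i}$), for $i<p$: $x_{N_i,i}=\mathcal A_i\bar x_i+T_i\bar d_i+D_i\mathbf a_i$ ($\lambda_{tc,i}$); $\bar x_0=\bar x$ ($\hat\lambda_{-1}$); $\bar x_{i+1}=\mathcal A_i\bar x_i+T_i\bar d_i+D_i\mathbf a_i$, $i=0,\dots,p-1$ ($\hat\lambda_i$). Sign convention: for each constraint written $\ell=r$ (left side as displayed) with multiplier $\mu$, the Lagrangian is objective $+\sum\mu^T(r-\ell)$ and stationarity is vanishing of its gradient with respect to all variables. *)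

From HB Require Import structures.
From mathcomp Require Import all_boot all_order all_algebra.
Set Implicit Arguments. Unset Strict Implicit. Unset Printing Implicit Defensive.
Import Order.TTheory GRing.Theory Num.Theory.
Local Open Scope ring_scope.

(* Data of problem MPC_N (stage-indexed by the global time t). *)
Record MPCData (R : realFieldType) (nx : nat) := {
  nu : nat -> nat;
  Ad : nat -> 'M[R]_nx;
  Bd : forall t, 'M[R]_(nx, nu t);
  ad : nat -> 'cV[R]_nx;
  Hd : forall t, 'M[R]_(nx + nu t);                  (* H_t  (acting on [x_t;u_t]) *)
  fd : forall t, 'cV[R]_(nx + nu t);
  cd : nat -> R;
  HN : 'M[R]_nx;  fN : 'cV[R]_nx;  cN : R }.

Section Defs.
Variables (R : realFieldType) (nx : nat) (d : MPCData R nx).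
Variables (Nb : nat -> nat) (p : nat).

Definition tau (i : nat) : nat := (\sum_(j < i) Nb j)%N.

Fixpoint prodA (F : nat -> 'M[R]_nx) (t0 k : nat) : 'M[R]_nx :=
  match k with 0 => 1%:M | k'.+1 => F (t0 + k')%N *m prodA F t0 k' end.

Definition Ablk (i t : nat) : 'M[R]_nx := Ad d (tau i + t).
Definition Bblk (i t : nat) : 'M[R]_(nx, nu d (tau i + t)) := Bd d (tau i + t).
Definition ablk (i t : nat) : 'cV[R]_nx := ad d (tau i + t).
Definition Hblk (i t : nat) : 'M[R]_(nx + nu d (tau i + t)) := Hd d (tau i + t).
Definition fblk (i t : nat) : 'cV[R]_(nx + nu d (tau i + t)) := fd d (tau i + t).

Definition calA (i : nat) : 'M[R]_nx := prodA (Ablk i) 0 (Nb i).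
Definition Dji (i j : nat) : 'M[R]_nx := prodA (Ablk i) j.+1 (Nb i - j.+1).
Definition Dmat (i : nat) : 'M[R]_(nx, \sum_(j < Nb i) nx) :=
  \mxrow_(j < Nb i) Dji i j.
Definition Smat (i : nat) : 'M[R]_(nx, \sum_(j < Nb i) nu d (tau i + j)) :=
  \mxrow_(j < Nb i) (Dji i j *m Bblk i j).
Definition abold (i : nat) : 'cV[R]_(\sum_(j < Nb i) nx) :=
  \mxcol_(j < Nb i) ablk i j.

(* Variables of E:  x i t = x_{t,i},  u i t = u_{t,i},  xb i = \bar x_i,  db i = \bar d_i.
   Multipliers:      lam i t = lambda_{t,i} (t = 0..N_i), lamtc i = lambda_{tc,i},
                     lhm1 = \hat lambda_{-1},  lh i = \hat lambda_i. *)
Definition lhprev (lhm1 : 'cV[R]_nx) (lh : nat -> 'cV[R]_nx) (i : nat) : 'cV[R]_nx :=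
  if i is j.+1 then lh j else lhm1.

Definition KKT_E (xbar0 : 'cV[R]_nx) (r : nat -> nat) (T : forall i, 'M[R]_(nx, r i))
    (x : nat -> nat -> 'cV[R]_nx) (u : forall i t, 'cV[R]_(nu d (tau i + t)))
    (xb : nat -> 'cV[R]_nx) (db : forall i, 'cV[R]_(r i))
    (lam : nat -> nat -> 'cV[R]_nx) (lamtc : nat -> 'cV[R]_nx)
    (lhm1 : 'cV[R]_nx) (lh : nat -> 'cV[R]_nx) : Prop :=
  let g i t := Hblk i t *m col_mx (x i t) (u i t) + fblk i t in
  [/\ (forall i, (i <= p)%N -> x i 0%N = xb i),
      (forall i t, (i <= p)%N -> (t < Nb i)%N ->
         x i t.+1 = Ablk i t *m x i t + Bblk i t *m u i t + ablk i t),
      (forall i, (i < p)%N ->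
         x i (Nb i) = calA i *m xb i + T i *m db i + Dmat i *m abold i),
      xb 0%N = xbar0 &
      (forall i, (i < p)%N ->
         xb i.+1 = calA i *m xb i + T i *m db i + Dmat i *m abold i)] /\
  (* stationarity of the Lagrangian  obj + sum mu^T (rhs - lhs) *)
  [/\ (forall i t, (i <= p)%N -> (t < Nb i)%N ->
         usubmx (g i t) - lam i t + (Ablk i t)^T *m lam i t.+1 = 0),
      (forall i t, (i <= p)%N -> (t < Nb i)%N ->
         dsubmx (g i t) + (Bblk i t)^T *m lam i t.+1 = 0),
      (forall i, (i < p)%N -> - lam i (Nb i) - lamtc i = 0) &
      HN d *m x p (Nb p) + fN d - lam p (Nb p) = 0] /\
  [/\ (forall i, (i < p)%N ->
         lam i 0%N + (calA i)^T *m lamtc i - lhprev lhm1 lh i + (calA i)^T *m lh i = 0),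
      lam p 0%N - lhprev lhm1 lh p = 0 &
      (forall i, (i < p)%N -> (T i)^T *m lamtc i + (T i)^T *m lh i = 0)].

Definition wvec (gamtc lh : nat -> 'cV[R]_nx) (i : nat) : 'cV[R]_nx :=
  - (gamtc i + lh i).

Definition newlam (gam : nat -> nat -> 'cV[R]_nx) (gamtc lh : nat -> 'cV[R]_nx)
    (i t : nat) : 'cV[R]_nx :=
  if (i < p)%N then
    (if t is j.+1 then gam i t - (Dji i j)^T *m wvec gamtc lh i
     else gam i 0%N - (calA i)^T *m wvec gamtc lh i)
  else gam i t.
Definition newlamtc (gamtc lh : nat -> 'cV[R]_nx) (i : nat) : 'cV[R]_nx :=
  gamtc i + wvec gamtc lh i.

End Defs.

Arguments KKT_E [R nx] d Nb p xbar0 [r] T x u xb db lam lamtc lhm1 lh.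

(* Three facts
   carry the proof:
   - stationarity of the Lagrangian w.r.t. \bar d_i says T_i^T w_i = 0; since the
     columns of S_i lie in the range of T_i, also S_i^T w_i = 0, i.e.
     (D_{t,i} B_{t,i})^T w_i = 0 for every block column t;
   - the products of transition matrices satisfy \mathcal A_i = D_{0,i} A_{0,i},
     D_{t,i} = D_{t+1,i} A_{t+1,i} and D_{N_i-1,i} = I, so the combination
     lambda_{t,i} - A_{t,i}^T lambda_{t+1,i} appearing in the state stationarity
     condition does not change under the shift, while the input stationarity
     condition only sees B_{t,i}^T D_{t,i}^T w_i = 0;
   - the remaining conditions (on x_{N_i,i}, \bar x_i, \bar d_i) are linear
     identities in which the shift produces exactly lambda_{tc,i} = -lhat_i,
     lambda_{0,i} = lhat_{i-1} and lambda_{N_i,i} = lhat_i. *)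
From HB Require Import structures.
From mathcomp Require Import all_boot all_order all_algebra.
Import Order.TTheory GRing.Theory Num.Theory.
Local Open Scope ring_scope.

Lemma submx_ker (F : fieldType) (m1 m2 n : nat)
    (A : 'M[F]_(m1, n)) (B : 'M[F]_(m2, n)) (v : 'cV[F]_n) :
  (A <= B)%MS -> B *m v = 0 -> A *m v = 0.
Proof. by move=> /submxP[D ->] Bv; rewrite -mulmxA Bv mulmx0. Qed.

Lemma mxrow_trker (R : pzSemiRingType) (q : nat) (q_ : 'I_q -> nat) (m : nat)
    (M : forall j, 'M[R]_(m, q_ j)) (v : 'cV[R]_m) (j : 'I_q) :
  (\mxrow_j M j)^T *m v = 0 -> (M j)^T *m v = 0.
Proof.
rewrite tr_mxrow => Mv.
by rewrite -(mxcolK (fun j => (M j)^T)) submxcol_mul Mv submxcol0.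
Qed.

Section TransitionProducts.
Variables (R : realFieldType) (nx : nat) (d : MPCData R nx) (Nb : nat -> nat).

Lemma prodA_recl (F : nat -> 'M[R]_nx) (t0 k : nat) :
  prodA F t0 k.+1 = prodA F t0.+1 k *m F t0.
Proof.
elim: k => [|k IH] /=; first by rewrite addn0 mulmx1 mul1mx.
by rewrite -/(prodA F t0 k.+1) IH mulmxA addSnnS.
Qed.

Lemma calA_factor (i : nat) :
  (0 < Nb i)%N -> calA d Nb i = Dji d Nb i 0 *m Ablk d Nb i 0.
Proof. by rewrite /calA /Dji; case: (Nb i) => // n _; rewrite prodA_recl subn1. Qed.

Lemma Dji_factor (i t : nat) :
  (t.+1 < Nb i)%N -> Dji d Nb i t = Dji d Nb i t.+1 *m Ablk d Nb i t.+1.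
Proof. by move=> ht; rewrite /Dji -subnSK // prodA_recl. Qed.

Lemma Dji_last (i : nat) : (0 < Nb i)%N -> Dji d Nb i (Nb i).-1 = 1%:M.
Proof. by move=> hN; rewrite /Dji prednK // subnn. Qed.

End TransitionProducts.

Section MultiplierShift.
Variables (R : realFieldType) (nx : nat) (d : MPCData R nx) (Nb : nat -> nat).
Variables (p : nat) (gam : nat -> nat -> 'cV[R]_nx) (gamtc lh : nat -> 'cV[R]_nx).

Local Notation w := (wvec gamtc lh).
Local Notation lam := (newlam d Nb p gam gamtc lh).
Local Notation lamtc := (newlamtc gamtc lh).
Local Notation A := (Ablk d Nb).
Local Notation B := (Bblk d Nb).

Lemma newlamtcE (i : nat) : lamtc i = - lh i.
Proof. by rewrite /newlamtc /wvec opprD addNKr. Qed.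

Lemma newlam_lastblock (t : nat) : lam p t = gam p t.
Proof. by rewrite /newlam ltnn. Qed.

Lemma newlam_initial (i : nat) (e : 'cV[R]_nx) : (i < p)%N ->
  gam i 0 + (calA d Nb i)^T *m gamtc i - e + (calA d Nb i)^T *m lh i = 0 ->
  lam i 0 = e.
Proof.
move=> hi /eqP; rewrite addrAC -[gam i 0 + _ + _]addrA -mulmxDr subr_eq0 => /eqP <-.
by rewrite /newlam hi /wvec mulmxN opprK.
Qed.

Lemma newlam_succ (i t : nat) : (i < p)%N ->
  lam i t.+1 = gam i t.+1 - (Dji d Nb i t)^T *m w i.
Proof. by rewrite /newlam => ->. Qed.

Lemma newlam_terminal (i : nat) : (i < p)%N -> (0 < Nb i)%N ->
  - gam i (Nb i) - gamtc i = 0 -> lam i (Nb i) = lh i.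
Proof.
move=> hi hN /eqP; rewrite -opprD oppr_eq0 => /eqP hg.
rewrite -(prednK hN) newlam_succ // prednK // Dji_last // trmx1 mul1mx.
by rewrite /wvec opprK addrA hg add0r.
Qed.

Lemma newlam_factor (i t : nat) : (i < p)%N -> (t < Nb i)%N ->
  lam i t = gam i t - (A i t)^T *m ((Dji d Nb i t)^T *m w i).
Proof.
rewrite /newlam => -> ht; rewrite mulmxA -trmx_mul.
by case: t ht => [|t] ht; [rewrite calA_factor | rewrite Dji_factor].
Qed.

Lemma newlam_state (i t : nat) : (t < Nb i)%N ->
  - lam i t + (A i t)^T *m lam i t.+1 = - gam i t + (A i t)^T *m gam i t.+1.
Proof.
move=> ht; have [hi | /negbTE hi] := boolP (i < p)%N; last by rewrite /newlam hi.
rewrite newlam_factor // newlam_succ // mulmxBr.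
by rewrite opprB addrC addrA subrK addrC.
Qed.

Lemma newlam_input (i t : nat) : (t < Nb i)%N ->
  ((i < p)%N -> (Smat d Nb i)^T *m w i = 0) ->
  (B i t)^T *m lam i t.+1 = (B i t)^T *m gam i t.+1.
Proof.
move=> ht Sw; have [hi | /negbTE hi] := boolP (i < p)%N; last by rewrite /newlam hi.
move: (Sw hi); rewrite /Smat => /(@mxrow_trker _ _ _ _ _ _ (Ordinal ht)) /=.
rewrite trmx_mul -mulmxA => BDw.
by rewrite newlam_succ // mulmxBr BDw subr0.
Qed.

End MultiplierShift.

Theorem mainTheorem5 (R : realFieldType) (nx : nat) (d : MPCData R nx)
    (N : nat) (Nb : nat -> nat) (p : nat)
    (xbar0 : 'cV[R]_nx) (r : nat -> nat) (T : forall i, 'M[R]_(nx, r i))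
    (* standing assumptions on the data of MPC_N *)
    (hN : (2 <= N)%N)
    (hHsym : forall t, (t < N)%N -> (Hd d t)^T = Hd d t)
    (hHpsd : forall t, (t < N)%N ->
       forall z : 'cV[R]_(nx + nu d t), 0 <= (z^T *m Hd d t *m z) 0 0)
    (hHupd : forall t, (t < N)%N ->
       forall v : 'cV[R]_(nu d t), v != 0 -> 0 < (v^T *m drsubmx (Hd d t) *m v) 0 0)
    (hHNsym : (HN d)^T = HN d)
    (hHNpsd : forall z : 'cV[R]_nx, 0 <= (z^T *m HN d *m z) 0 0)
    (* the splitting *)
    (hp1 : (1 <= p)%N) (hpN : (p < N)%N)
    (hNb : forall i, (i <= p)%N -> (1 <= Nb i)%N)
    (hsum : N = (\sum_(i < p.+1) Nb i)%N)
    (* T_i: columns form a basis of range(S_i) *)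
    (hT : forall i, (i < p)%N ->
       (((T i)^T == (Smat d Nb i)^T)%MS && row_free (T i)^T))
    (* a KKT point of E *)
    (x : nat -> nat -> 'cV[R]_nx) (u : forall i t, 'cV[R]_(nu d (tau Nb i + t)))
    (xb : nat -> 'cV[R]_nx) (db : forall i, 'cV[R]_(r i))
    (gam : nat -> nat -> 'cV[R]_nx) (gamtc : nat -> 'cV[R]_nx)
    (lhm1 : 'cV[R]_nx) (lh : nat -> 'cV[R]_nx) :
  KKT_E d Nb p xbar0 T x u xb db gam gamtc lhm1 lh ->
  (forall i, (i < p)%N -> (Smat d Nb i)^T *m wvec gamtc lh i = 0) /\
  KKT_E d Nb p xbar0 T x u xb db
        (newlam d Nb p gam gamtc lh) (newlamtc gamtc lh) lhm1 lh /\
  (forall i, (i < p)%N ->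
     [/\ newlamtc gamtc lh i = - lh i,
         newlam d Nb p gam gamtc lh i 0%N = lhprev lhm1 lh i &
         newlam d Nb p gam gamtc lh i (Nb i) = lh i]).
Proof.
rewrite /KKT_E; cbv zeta.
move=> [primal [[Sx Su Sterm SN] [Sxb Sxbp Sdb]]].
(* stationarity w.r.t. \bar d_i: w_i lies in ker T_i^T, hence in ker S_i^T *)
have Sw i : (i < p)%N -> (Smat d Nb i)^T *m wvec gamtc lh i = 0.
  move=> hi; have /andP[/andP[_ sST] _] := hT i hi.
  by apply: submx_ker sST _; rewrite /wvec mulmxN mulmxDr Sdb // oppr0.
have lam0 i : (i < p)%N -> newlam d Nb p gam gamtc lh i 0 = lhprev lhm1 lh i.
  by move=> hi; apply: newlam_initial; [exact: hi | exact: Sxb].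
have lamN i : (i < p)%N -> newlam d Nb p gam gamtc lh i (Nb i) = lh i.
  by move=> hi; apply: newlam_terminal (Sterm i hi); rewrite // hNb // ltnW.
split; first exact: Sw.
split; last by move=> i hi; rewrite newlamtcE lam0 // lamN.
split; first exact: primal.
split; split.
- by move=> i t hi ht; rewrite -addrA newlam_state // addrA Sx.
- by move=> i t hi ht; rewrite newlam_input; [exact: Su | done | exact: Sw].
- by move=> i hi; rewrite lamN // newlamtcE subrr.
- by rewrite newlam_lastblock.
- by move=> i hi; rewrite lam0 // newlamtcE mulmxN addrAC subrK subrr.
- by rewrite newlam_lastblock.
- by move=> i hi; rewrite newlamtcE mulmxN addNr.
Qed.
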